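(* The 2D incompressible Euler equations $$\mathbf{u}_t+\mathbf{u}\cdot\nabla\mathbf{u}=-\nabla p,\qquad\nabla\cdot\mathbf{u}=0$$ subject to periodic boundary conditions on $\mathbb{T}^2$ do not possess the finitely many determining modes property in $H$; that is, there is no positive integer $M$ such that for any two solutions $\mathbf{u}_1,\mathbf{u}_2$ (with initial data in $V^3$), $\lim_{t\to\infty}\|P_M(\mathbf{u}_1(t)-\mathbf{u}_2(t))\|_H=0$ implies $\lim_{t\to\infty}\|\mathbf{u}_1(t)-\mathbf{u}_2(t)\|_H=0$.
   Context: $\mathbb{T}^2=[0,2\pi)^2$. Let $\mathcal{V}$ be the set of $\mathbb{R}^2$-valued $2\pi$-periodic trigonometric polynomials $\varphi$ with $\nabla\cdot\varphi=0$ and $\int_{\mathbb{T}^2}\varphi=0$; $H$ is the closure of $\mathcal{V}$ in $L^2$, $V^s$ its closure in the $H^s$ seminorm. $P_M$ is the projection onto the Fourier modes $\mathbf{n}\in\mathbb{Z}^2\setminus\{(0,0)\}$ with $|\mathbf{n}|\le M$. For data in $V^s$, $s\ge3$, the Euler equations are globally well-posed with unique solutions in $C([0,T];V^s)$ and conserve the $H$ norm. *)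

From Stdlib Require Import Reals ZArith List Lra.
From Coquelicot Require Import Coquelicot.
Open Scope R_scope.

(* A (time-independent) planar vector field on T^2, given by a
   2*pi-periodic representative  (x,y) |-> (u1(x,y), u2(x,y)). *)
Definition field := R -> R -> R * R.
Definition flow := R -> field.
Definition sflow := R -> R -> R -> R.

Definition comp1 (w : field) : R -> R -> R := fun x y => fst (w x y).
Definition comp2 (w : field) : R -> R -> R := fun x y => snd (w x y).

Definition dint (f : R -> R -> R) : R :=
  RInt (fun x => RInt (fun y => f x y) 0 (2 * PI)) 0 (2 * PI).

Definition Hnorm (w : field) : R :=
  sqrt (dint (fun x y => (comp1 w x y) ^ 2 + (comp2 w x y) ^ 2)).

Definition fsub (w v : field) : field :=
  fun x y => (fst (w x y) - fst (v x y), snd (w x y) - snd (v x y)).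

Definition dx (f : R -> R -> R) (x y : R) : R := Derive (fun a => f a y) x.
Definition dy (f : R -> R -> R) (x y : R) : R := Derive (fun b => f x b) y.

Definition Zbox (N : nat) : list Z :=
  map (fun k => (Z.of_nat k - Z.of_nat N)%Z) (seq 0 (2 * N + 1)).

Definition sum_box (N : nat) (F : Z -> Z -> R) : R :=
  fold_right Rplus 0
    (map (fun n1 => fold_right Rplus 0 (map (fun n2 => F n1 n2) (Zbox N))) (Zbox N)).

(* P_M: projection onto Fourier modes n in Z^2 \ {0} with |n| <= M.
   Written in real form:  sum_n  hat w_n e^{i n.x}
     = (1/(4 pi^2)) sum_n  int w(xi,eta) cos(n1 (x - xi) + n2 (y - eta)). *)
Definition PM_scalar (M : nat) (f : R -> R -> R) : R -> R -> R :=
  fun x y =>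
    sum_box M (fun n1 n2 =>
      if ((0 <? n1 * n1 + n2 * n2)%Z && (n1 * n1 + n2 * n2 <=? Z.of_nat M * Z.of_nat M)%Z)%bool
      then / (4 * PI ^ 2) *
           dint (fun a b => f a b * cos (IZR n1 * (x - a) + IZR n2 * (y - b)))
      else 0).

Definition PM (M : nat) (w : field) : field :=
  fun x y => (PM_scalar M (comp1 w) x y, PM_scalar M (comp2 w) x y).

(* |hat f_n|^2 for the Fourier coefficient hat f_n = (1/4pi^2) int f e^{-i n.x} *)
Definition fc_sq (f : R -> R -> R) (n1 n2 : Z) : R :=
  ((dint (fun x y => f x y * cos (IZR n1 * x + IZR n2 * y))) ^ 2 +
   (dint (fun x y => f x y * sin (IZR n1 * x + IZR n2 * y))) ^ 2) / (4 * PI ^ 2) ^ 2.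

Definition H3_partial (w : field) (N : nat) : R :=
  sum_box N (fun n1 n2 =>
    (IZR (n1 * n1 + n2 * n2)) ^ 3 * (fc_sq (comp1 w) n1 n2 + fc_sq (comp2 w) n1 n2)).

Definition periodic (f : R -> R -> R) : Prop :=
  forall x y, f (x + 2 * PI) y = f x y /\ f x (y + 2 * PI) = f x y.

Definition jcont (f : R -> R -> R) : Prop :=
  forall x y, continuous (fun q : R * R => f (fst q) (snd q)) (x, y).

Definition C1 (f : R -> R -> R) : Prop :=
  jcont f /\
  (forall x y, ex_derive (fun a => f a y) x /\ ex_derive (fun b => f x b) y) /\
  jcont (dx f) /\ jcont (dy f).

(* w is (the C^1 representative of) an element of V^3:
   periodic, divergence free, mean zero, finite H^3 seminorm *)
Definition in_V3 (w : field) : Prop :=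
  periodic (comp1 w) /\ periodic (comp2 w) /\
  C1 (comp1 w) /\ C1 (comp2 w) /\
  (forall x y, dx (comp1 w) x y + dy (comp2 w) x y = 0) /\
  dint (comp1 w) = 0 /\ dint (comp2 w) = 0 /\
  (exists C, forall N, H3_partial w N <= C).

Definition cont_V3 (u : flow) : Prop :=
  forall t, 0 <= t -> forall eps, 0 < eps -> exists delta, 0 < delta /\
    forall s, 0 <= s -> Rabs (s - t) < delta ->
      forall N, H3_partial (fsub (u s) (u t)) N <= eps.

Definition euler_solution (u : flow) : Prop :=
  (forall t, 0 <= t -> in_V3 (u t)) /\ cont_V3 u /\
  exists p : sflow,
    forall t, 0 < t -> forall x y,
      ex_derive (fun s => comp1 (u s) x y) t /\
      ex_derive (fun s => comp2 (u s) x y) t /\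
      ex_derive (fun a => p t a y) x /\ ex_derive (fun b => p t x b) y /\
      Derive (fun s => comp1 (u s) x y) t
        + comp1 (u t) x y * dx (comp1 (u t)) x y
        + comp2 (u t) x y * dy (comp1 (u t)) x y
        = - dx (p t) x y /\
      Derive (fun s => comp2 (u s) x y) t
        + comp1 (u t) x y * dx (comp2 (u t)) x y
        + comp2 (u t) x y * dy (comp2 (u t)) x y
        = - dy (p t) x y.

Definition determining_modes (M : nat) : Prop :=
  forall u1 u2 : flow, euler_solution u1 -> euler_solution u2 ->
    is_lim (fun t => Hnorm (PM M (fsub (u1 t) (u2 t)))) p_infty 0 ->
    is_lim (fun t => Hnorm (fsub (u1 t) (u2 t))) p_infty 0.

(* The shear flow u(x, y) = (sin (k y), 0) is a steady solution of the Euler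
   equations with zero pressure, because u.grad u = sin (k y) d_x u = 0.  Its
   Fourier support is {(0, k), (0, -k)}, so for k = M + 1 the projection P_M
   annihilates it, while its H norm is sqrt (2 pi^2) > 0.  Compared with the
   zero solution, the low modes of the difference vanish for all time but the
   difference itself does not tend to 0. *)

From Pilot Require Import Defs.
From Stdlib Require Import Reals ZArith List Lra Lia FinFun.
From Coquelicot Require Import Coquelicot.
Open Scope R_scope.

Lemma cos_sin_period_Z (j : Z) (phi : R) :
  cos (phi + 2 * IZR j * PI) = cos phi /\ sin (phi + 2 * IZR j * PI) = sin phi.
Proof.
  destruct j as [|p|p].
  - now rewrite Rmult_0_r, Rmult_0_l, Rplus_0_r.
  - rewrite <- (positive_nat_Z p), <- INR_IZR_INZ.
    split; [apply cos_period | apply sin_period].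
  - rewrite <- Pos2Z.opp_pos, opp_IZR, <- (positive_nat_Z p), <- INR_IZR_INZ.
    set (n := Pos.to_nat p).
    rewrite <- (cos_period (phi + 2 * - INR n * PI) n),
            <- (sin_period (phi + 2 * - INR n * PI) n).
    replace (phi + 2 * - INR n * PI + 2 * INR n * PI) with phi by ring.
    split; reflexivity.
Qed.

Lemma ex_RInt_sin_affine (c phi a b : R) : ex_RInt (fun x => sin (c * x + phi)) a b.
Proof.
  apply (@ex_RInt_continuous R_CompleteNormedModule); intros x _.
  apply (@ex_derive_continuous R_AbsRing R_NormedModule); auto_derive; trivial.
Qed.

Lemma ex_RInt_cos_affine (c phi a b : R) : ex_RInt (fun x => cos (c * x + phi)) a b.
Proof.
  apply (@ex_RInt_continuous R_CompleteNormedModule); intros x _.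
  apply (@ex_derive_continuous R_AbsRing R_NormedModule); auto_derive; trivial.
Qed.

Lemma RInt_const_R (c a b : R) : RInt (fun _ => c) a b = (b - a) * c.
Proof. now rewrite RInt_const. Qed.

Lemma RInt_eq0 (f : R -> R) (a b : R) : (forall x, f x = 0) -> RInt f a b = 0.
Proof.
  intros Hf. rewrite (RInt_ext _ (fun _ => 0)) by (intros x _; apply Hf).
  rewrite RInt_const_R; apply Rmult_0_r.
Qed.

Lemma RInt_lin_comb (f g : R -> R) (a b c d : R) :
  ex_RInt f a b -> ex_RInt g a b ->
  RInt (fun x => c * f x + d * g x) a b = c * RInt f a b + d * RInt g a b.
Proof.
  intros Hf Hg.
  rewrite (RInt_plus (fun x => c * f x) (fun x => d * g x))
    by now apply (ex_RInt_scal (V := R_CompleteNormedModule)).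
  now rewrite !(RInt_scal (V := R_CompleteNormedModule)).
Qed.

Lemma RInt_sin_period (j : Z) (phi : R) :
  RInt (fun b => sin (IZR j * b + phi)) 0 (2 * PI) =
  if Z.eqb j 0 then 2 * PI * sin phi else 0.
Proof.
  destruct (Z.eqb_spec j 0) as [-> | Hj].
  - rewrite (RInt_ext _ (fun _ => sin phi)), RInt_const_R, Rminus_0_r; [reflexivity |].
    intros b _; now rewrite Rmult_0_l, Rplus_0_l.
  - apply not_0_IZR in Hj.
    rewrite (is_RInt_unique _ _ _ _ (@is_RInt_derive R_CompleteNormedModule
      (fun b => - cos (IZR j * b + phi) / IZR j) (fun b => sin (IZR j * b + phi)) 0 (2 * PI)
      ltac:(intros b _; auto_derive; [trivial | field; trivial])
      ltac:(intros b _; apply (@ex_derive_continuous R_AbsRing R_NormedModule);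
            auto_derive; trivial))).
    unfold minus, plus, opp; simpl.
    replace (IZR j * (2 * PI) + phi) with (phi + 2 * IZR j * PI) by ring.
    rewrite (proj1 (cos_sin_period_Z j phi)), Rmult_0_r, Rplus_0_l.
    field; trivial.
Qed.

Lemma RInt_cos_period (j : Z) (phi : R) :
  RInt (fun b => cos (IZR j * b + phi)) 0 (2 * PI) =
  if Z.eqb j 0 then 2 * PI * cos phi else 0.
Proof.
  destruct (Z.eqb_spec j 0) as [-> | Hj].
  - rewrite (RInt_ext _ (fun _ => cos phi)), RInt_const_R, Rminus_0_r; [reflexivity |].
    intros b _; now rewrite Rmult_0_l, Rplus_0_l.
  - apply not_0_IZR in Hj.
    rewrite (is_RInt_unique _ _ _ _ (@is_RInt_derive R_CompleteNormedModule
      (fun b => sin (IZR j * b + phi) / IZR j) (fun b => cos (IZR j * b + phi)) 0 (2 * PI)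
      ltac:(intros b _; auto_derive; [trivial | field; trivial])
      ltac:(intros b _; apply (@ex_derive_continuous R_AbsRing R_NormedModule);
            auto_derive; trivial))).
    unfold minus, plus, opp; simpl.
    replace (IZR j * (2 * PI) + phi) with (phi + 2 * IZR j * PI) by ring.
    rewrite (proj2 (cos_sin_period_Z j phi)), Rmult_0_r, Rplus_0_l.
    field; trivial.
Qed.

Lemma RInt_sin_mul_cos (k m : Z) (th : R) :
  RInt (fun b => sin (IZR k * b) * cos (th + IZR m * b)) 0 (2 * PI) =
  / 2 * (if Z.eqb (k + m) 0 then 2 * PI * sin th else 0) +
  / 2 * (if Z.eqb (k - m) 0 then 2 * PI * sin (- th) else 0).
Proof.
  rewrite (RInt_ext _ (fun b => / 2 * sin (IZR (k + m) * b + th)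
                               + / 2 * sin (IZR (k - m) * b + - th))).
  - now rewrite RInt_lin_comb, !RInt_sin_period by apply ex_RInt_sin_affine.
  - intros b _. rewrite plus_IZR, minus_IZR.
    replace ((IZR k + IZR m) * b + th) with (IZR k * b + (th + IZR m * b)) by ring.
    replace ((IZR k - IZR m) * b + - th) with (IZR k * b - (th + IZR m * b)) by ring.
    rewrite sin_plus, sin_minus. simpl. field.
Qed.

Lemma RInt_sin_mul_sin (k m : Z) (th : R) :
  RInt (fun b => sin (IZR k * b) * sin (th + IZR m * b)) 0 (2 * PI) =
  / 2 * (if Z.eqb (k - m) 0 then 2 * PI * cos (- th) else 0) +
  - / 2 * (if Z.eqb (k + m) 0 then 2 * PI * cos th else 0).
Proof.
  rewrite (RInt_ext _ (fun b => / 2 * cos (IZR (k - m) * b + - th)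
                               + - / 2 * cos (IZR (k + m) * b + th))).
  - now rewrite RInt_lin_comb, !RInt_cos_period by apply ex_RInt_cos_affine.
  - intros b _. rewrite plus_IZR, minus_IZR.
    replace ((IZR k + IZR m) * b + th) with (IZR k * b + (th + IZR m * b)) by ring.
    replace ((IZR k - IZR m) * b + - th) with (IZR k * b - (th + IZR m * b)) by ring.
    rewrite cos_plus, cos_minus. simpl. field.
Qed.

Lemma dint_ext (f g : R -> R -> R) : (forall x y, f x y = g x y) -> dint f = dint g.
Proof.
  intros Hfg. apply RInt_ext; intros x _. apply RInt_ext; intros y _. apply Hfg.
Qed.

Lemma dint_eq0 (f : R -> R -> R) : (forall x y, f x y = 0) -> dint f = 0.
Proof. intros Hf. apply RInt_eq0; intros x. apply RInt_eq0; intros y. apply Hf. Qed.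

Lemma dint_sin_y_mul_cos (k n1 n2 : Z) :
  dint (fun x y => sin (IZR k * y) * cos (IZR n1 * x + IZR n2 * y)) = 0.
Proof.
  unfold dint.
  set (A := / 2 * (if Z.eqb (k + n2) 0 then 2 * PI else 0)).
  set (B := - / 2 * (if Z.eqb (k - n2) 0 then 2 * PI else 0)).
  rewrite (RInt_ext _ (fun x => A * sin (IZR n1 * x + 0) + B * sin (IZR n1 * x + 0))).
  - rewrite RInt_lin_comb, !RInt_sin_period, sin_0 by apply ex_RInt_sin_affine.
    destruct (Z.eqb n1 0); ring.
  - intros x _. rewrite RInt_sin_mul_cos, sin_neg, Rplus_0_r. unfold A, B.
    destruct (Z.eqb (k + n2) 0), (Z.eqb (k - n2) 0); simpl; ring.
Qed.

Lemma dint_sin_y_mul_sin (k n1 n2 : Z) :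
  (n1 <> 0 \/ (n2 <> k /\ n2 <> - k))%Z ->
  dint (fun x y => sin (IZR k * y) * sin (IZR n1 * x + IZR n2 * y)) = 0.
Proof.
  intros Hmode. unfold dint.
  set (A := / 2 * (if Z.eqb (k - n2) 0 then 2 * PI else 0)).
  set (B := - / 2 * (if Z.eqb (k + n2) 0 then 2 * PI else 0)).
  rewrite (RInt_ext _ (fun x => A * cos (IZR n1 * x + 0) + B * cos (IZR n1 * x + 0))).
  - rewrite RInt_lin_comb, !RInt_cos_period by apply ex_RInt_cos_affine.
    destruct Hmode as [Hn1 | [Hk Hmk]].
    + apply Z.eqb_neq in Hn1. rewrite Hn1. ring.
    + unfold A, B.
      replace (Z.eqb (k - n2) 0) with false by (symmetry; apply Z.eqb_neq; lia).
      replace (Z.eqb (k + n2) 0) with false by (symmetry; apply Z.eqb_neq; lia).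
      ring.
  - intros x _. rewrite RInt_sin_mul_sin, cos_neg, Rplus_0_r. unfold A, B.
    destruct (Z.eqb (k + n2) 0), (Z.eqb (k - n2) 0); simpl; ring.
Qed.

Definition lsum (l : list Z) (g : Z -> R) : R := fold_right Rplus 0 (map g l).

Lemma sum_box_lsum (N : nat) (F : Z -> Z -> R) :
  sum_box N F = lsum (Zbox N) (fun n1 => lsum (Zbox N) (fun n2 => F n1 n2)).
Proof. reflexivity. Qed.

Lemma lsum_eq0 (l : list Z) (g : Z -> R) : (forall z, In z l -> g z = 0) -> lsum l g = 0.
Proof.
  induction l as [| z l IH]; intros Hg; [reflexivity |].
  change (g z + lsum l g = 0).
  rewrite Hg, IH; [ring | intros; apply Hg | ]; simpl; auto.
Qed.

Lemma lsum_nonneg (l : list Z) (g : Z -> R) : (forall z, 0 <= g z) -> 0 <= lsum l g.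
Proof.
  induction l as [| z l IH]; intros Hg; [apply Rle_refl |].
  change (0 <= g z + lsum l g).
  apply Rplus_le_le_0_compat; auto.
Qed.

Lemma lsum_le_single (l : list Z) (g : Z -> R) (a : Z) :
  NoDup l -> (forall z, 0 <= g z) ->
  (forall z, In z l -> z <> a -> g z = 0) -> lsum l g <= g a.
Proof.
  induction l as [| z l IH]; intros Hl Hg Hsupp; [apply Hg |].
  change (g z + lsum l g <= g a).
  apply NoDup_cons_iff in Hl as [Hz Hl].
  destruct (Z.eq_dec z a) as [-> | Hza].
  - rewrite lsum_eq0; [lra |].
    intros z' Hz'; apply Hsupp; [simpl; auto | intros ->; contradiction].
  - rewrite Hsupp by (simpl; auto).
    assert (lsum l g <= g a) by (apply IH; auto; intros; apply Hsupp; simpl; auto).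
    lra.
Qed.

Lemma lsum_le_pair (l : list Z) (g : Z -> R) (a b : Z) :
  NoDup l -> (forall z, 0 <= g z) ->
  (forall z, In z l -> z <> a -> z <> b -> g z = 0) -> lsum l g <= g a + g b.
Proof.
  induction l as [| z l IH]; intros Hl Hg Hsupp.
  - change (0 <= g a + g b); pose proof (Hg a); pose proof (Hg b); lra.
  - change (g z + lsum l g <= g a + g b).
    apply NoDup_cons_iff in Hl as [Hz Hl].
    destruct (Z.eq_dec z a) as [-> | Hza]; [| destruct (Z.eq_dec z b) as [-> | Hzb]].
    + assert (lsum l g <= g b); [| lra].
      apply lsum_le_single; auto.
      intros z' Hz' Hb; apply Hsupp; [simpl; auto | intros -> |]; auto.
    + assert (lsum l g <= g a); [| lra].
      apply lsum_le_single; auto.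
      intros z' Hz' Ha; apply Hsupp; [simpl; auto | | intros ->]; auto.
    + rewrite Hsupp by (simpl; auto).
      assert (lsum l g <= g a + g b); [| lra].
      apply IH; auto; intros; apply Hsupp; simpl; auto.
Qed.

Lemma Zbox_NoDup (N : nat) : NoDup (Zbox N).
Proof.
  apply Injective_map_NoDup; [intros x y Hxy; lia | apply seq_NoDup].
Qed.

Lemma jcont_ext (f g : R -> R -> R) : (forall x y, f x y = g x y) -> jcont g -> jcont f.
Proof.
  intros Hfg Hg x y.
  apply (continuous_ext (fun q : R * R => g (fst q) (snd q))); [intros; now rewrite Hfg |].
  apply Hg.
Qed.

Lemma jcont_of_y (h : R -> R) : (forall y, continuous h y) -> jcont (fun _ y => h y).
Proof. intros Hh x y. apply (continuous_comp snd h); [apply continuous_snd | apply Hh]. Qed.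

Lemma C1_of_y (h : R -> R) :
  (forall y, ex_derive h y) -> (forall y, continuous (Derive h) y) -> Defs.C1 (fun _ y => h y).
Proof.
  intros Hd Hc.
  assert (Hdx : forall x y, dx (fun _ y => h y) x y = 0) by (intros; unfold dx; apply Derive_const).
  split; [| split; [| split]].
  - apply jcont_of_y; intros y. now apply (@ex_derive_continuous R_AbsRing R_NormedModule).
  - intros x y; split; [apply ex_derive_const | apply Hd].
  - apply (jcont_ext _ (fun _ _ => 0) Hdx), (jcont_of_y (fun _ => 0)); intros; apply continuous_const.
  - apply (jcont_of_y (Derive h)), Hc.
Qed.

Lemma fc_sq_nonneg (f : R -> R -> R) (n1 n2 : Z) : 0 <= fc_sq f n1 n2.
Proof.
  apply Rmult_le_pos.
  - apply Rplus_le_le_0_compat; apply pow2_ge_0.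
  - apply Rlt_le, Rinv_0_lt_compat, pow_lt, Rmult_lt_0_compat; [lra |].
    apply pow_lt, PI_RGT_0.
Qed.

Lemma fc_sq_eq0 (f : R -> R -> R) (n1 n2 : Z) : (forall x y, f x y = 0) -> fc_sq f n1 n2 = 0.
Proof.
  intros Hf. unfold fc_sq.
  rewrite !dint_eq0 by (intros; rewrite Hf; ring).
  unfold Rdiv; ring.
Qed.

Lemma H3_partial_eq0 (w : field) (N : nat) :
  (forall x y, comp1 w x y = 0) -> (forall x y, comp2 w x y = 0) -> H3_partial w N = 0.
Proof.
  intros H1 H2. unfold H3_partial. rewrite sum_box_lsum.
  apply lsum_eq0; intros n1 _. apply lsum_eq0; intros n2 _.
  rewrite !fc_sq_eq0 by assumption. ring.
Qed.

Definition shear (k : Z) : field := fun _ y => (sin (IZR k * y), 0).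

Definition zero_field : field := fun _ _ => (0, 0).

Lemma fc_sq_shear_eq0 (k n1 n2 : Z) :
  (n1 <> 0 \/ (n2 <> k /\ n2 <> - k))%Z -> fc_sq (comp1 (shear k)) n1 n2 = 0.
Proof.
  intros Hmode. unfold fc_sq, comp1, shear; cbn [fst].
  rewrite dint_sin_y_mul_cos, dint_sin_y_mul_sin by assumption.
  unfold Rdiv; ring.
Qed.

Lemma H3_partial_shear_bounded (k : Z) : exists C, forall N, H3_partial (shear k) N <= C.
Proof.
  set (F := fun n1 n2 => IZR (n1 * n1 + n2 * n2) ^ 3 *
              (fc_sq (comp1 (shear k)) n1 n2 + fc_sq (comp2 (shear k)) n1 n2)).
  assert (HF : forall n1 n2, 0 <= F n1 n2).
  { intros n1 n2. apply Rmult_le_pos.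
    - apply pow_le, IZR_le; nia.
    - apply Rplus_le_le_0_compat; apply fc_sq_nonneg. }
  assert (HFsupp : forall n1 n2, (n1 <> 0 \/ (n2 <> k /\ n2 <> - k))%Z -> F n1 n2 = 0).
  { intros n1 n2 Hmode. unfold F.
    rewrite fc_sq_shear_eq0, fc_sq_eq0 by (assumption || reflexivity). ring. }
  exists (F 0%Z k + F 0%Z (- k)%Z); intros N.
  unfold H3_partial; rewrite sum_box_lsum; fold F.
  apply (Rle_trans _ (lsum (Zbox N) (fun n2 => F 0%Z n2))).
  - apply (lsum_le_single _ (fun n1 => lsum (Zbox N) (fun n2 => F n1 n2))).
    + apply Zbox_NoDup.
    + intros; apply lsum_nonneg; auto.
    + intros n1 _ Hn1; apply lsum_eq0; auto.
  - apply lsum_le_pair; auto using Zbox_NoDup.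
Qed.

Lemma C1_zero : Defs.C1 (fun _ _ => 0).
Proof.
  apply (C1_of_y (fun _ => 0)); intros; [apply ex_derive_const |].
  apply (continuous_ext (fun _ => 0)); [intros; symmetry; apply Derive_const |].
  apply continuous_const.
Qed.

Lemma in_V3_zero : in_V3 zero_field.
Proof.
  refine (conj _ (conj _ (conj C1_zero (conj C1_zero (conj _ (conj _ (conj _ _))))))).
  - split; reflexivity.
  - split; reflexivity.
  - intros x y; unfold dx, dy, comp1, comp2, zero_field; cbn [fst snd].
    rewrite !Derive_const; ring.
  - now apply dint_eq0.
  - now apply dint_eq0.
  - exists 0; intros N. now rewrite H3_partial_eq0.
Qed.

Lemma in_V3_shear (k : Z) : in_V3 (shear k).
Proof.
  refine (conj _ (conj _ (conj _ (conj C1_zero (conj _ (conj _ (conj _ _))))))).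
  - intros x y; split; [reflexivity |].
    unfold comp1, shear; cbn [fst].
    replace (IZR k * (y + 2 * PI)) with (IZR k * y + 2 * IZR k * PI) by ring.
    apply cos_sin_period_Z.
  - split; reflexivity.
  - apply (C1_of_y (fun y => sin (IZR k * y))); intros y.
    + auto_derive; trivial.
    + apply (continuous_ext (fun y => IZR k * cos (IZR k * y))).
      { intros z; symmetry; apply is_derive_unique; auto_derive; trivial; ring. }
      apply (@ex_derive_continuous R_AbsRing R_NormedModule); auto_derive; trivial.
  - intros x y; unfold dx, dy, comp1, comp2, shear; cbn [fst snd].
    rewrite !Derive_const; ring.
  - apply RInt_eq0; intros x.
    rewrite (RInt_ext _ (fun y => sin (IZR k * y + 0))), RInt_sin_period, sin_0.
    + now destruct (Z.eqb k 0); rewrite ?Rmult_0_r.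
    + intros y _; now rewrite Rplus_0_r.
  - now apply dint_eq0.
  - apply H3_partial_shear_bounded.
Qed.

Lemma steady_euler_solution (w : field) :
  in_V3 w ->
  (forall x y, comp1 w x y * dx (comp1 w) x y + comp2 w x y * dy (comp1 w) x y = 0) ->
  (forall x y, comp1 w x y * dx (comp2 w) x y + comp2 w x y * dy (comp2 w) x y = 0) ->
  euler_solution (fun _ => w).
Proof.
  intros Hw Hconv1 Hconv2. split; [| split].
  - intros; exact Hw.
  - intros t _ eps Heps. exists 1; split; [lra |]; intros s _ _ N.
    rewrite H3_partial_eq0; [lra | |]; intros; unfold comp1, comp2, fsub; simpl; ring.
  - exists (fun _ _ _ => 0); intros t _ x y.
    assert (Hp : dx (fun _ _ => 0) x y = 0 /\ dy (fun _ _ => 0) x y = 0)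
      by (unfold dx, dy; now rewrite !Derive_const).
    repeat split; try apply ex_derive_const.
    + cbv beta; rewrite Derive_const, (proj1 Hp). pose proof (Hconv1 x y); lra.
    + cbv beta; rewrite Derive_const, (proj2 Hp). pose proof (Hconv2 x y); lra.
Qed.

Lemma euler_solution_zero : euler_solution (fun _ => zero_field).
Proof.
  apply steady_euler_solution; [apply in_V3_zero | |];
    intros; unfold comp1, comp2, zero_field; cbn [fst snd]; ring.
Qed.

Lemma euler_solution_shear (k : Z) : euler_solution (fun _ => shear k).
Proof.
  apply steady_euler_solution; [apply in_V3_shear | |];
    intros; unfold dx, comp1, comp2, shear; cbn [fst snd]; rewrite Derive_const; ring.
Qed.

Lemma PM_scalar_eq0 (M : nat) (f : R -> R -> R) (x y : R) :
  (forall a b, f a b = 0) -> PM_scalar M f x y = 0.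
Proof.
  intros Hf. unfold PM_scalar; rewrite sum_box_lsum.
  apply lsum_eq0; intros n1 _; apply lsum_eq0; intros n2 _.
  destruct (_ && _)%bool; [| reflexivity].
  rewrite dint_eq0; [ring |]; intros a b; rewrite Hf; ring.
Qed.

Lemma PM_scalar_sin_y_eq0 (M : nat) (k : Z) (f : R -> R -> R) (x y : R) :
  (Z.of_nat M < k)%Z -> (forall a b, f a b = sin (IZR k * b)) -> PM_scalar M f x y = 0.
Proof.
  intros Hk Hf. unfold PM_scalar; rewrite sum_box_lsum.
  apply lsum_eq0; intros n1 _; apply lsum_eq0; intros n2 _.
  destruct (_ && _)%bool eqn:Hmode; [| reflexivity].
  apply andb_prop in Hmode as [_ Hmode]; apply Z.leb_le in Hmode.
  unfold dint; rewrite RInt_eq0; [ring |]; intros a.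
  (* In the b-integral sin (k b) only meets the frequency -n2, and |n2| <= M < k. *)
  rewrite (RInt_ext _ (fun b => sin (IZR k * b) *
             cos ((IZR n1 * (x - a) + IZR n2 * y) + IZR (- n2) * b))).
  - rewrite RInt_sin_mul_cos.
    replace (Z.eqb (k + - n2) 0) with false by (symmetry; apply Z.eqb_neq; nia).
    replace (Z.eqb (k - - n2) 0) with false by (symmetry; apply Z.eqb_neq; nia).
    ring.
  - intros b _. rewrite Hf, opp_IZR. simpl; f_equal; f_equal; ring.
Qed.

Lemma Hnorm_eq0 (w : field) :
  (forall x y, comp1 w x y = 0) -> (forall x y, comp2 w x y = 0) -> Hnorm w = 0.
Proof.
  intros H1 H2. unfold Hnorm. rewrite dint_eq0; [apply sqrt_0 |].
  intros x y; rewrite H1, H2; ring.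
Qed.

Lemma Hnorm_sin_y (w : field) (k : Z) :
  k <> 0%Z -> (forall x y, comp1 w x y = sin (IZR k * y)) -> (forall x y, comp2 w x y = 0) ->
  Hnorm w = sqrt (2 * PI ^ 2).
Proof.
  intros Hk H1 H2. unfold Hnorm, dint.
  rewrite (RInt_ext _ (fun _ => PI)), RInt_const_R; [f_equal; ring |].
  intros x _.
  rewrite (RInt_ext _ (fun y => / 2 * cos (IZR 0 * y + 0) + - / 2 * cos (IZR (2 * k) * y + 0))).
  - rewrite RInt_lin_comb, !RInt_cos_period by apply ex_RInt_cos_affine.
    replace (Z.eqb (2 * k) 0) with false by (symmetry; apply Z.eqb_neq; lia).
    simpl Z.eqb; cbv iota. rewrite cos_0. simpl; field.
  - intros y _. rewrite H1, H2, mult_IZR.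
    replace (IZR 2 * IZR k * y + 0) with (2 * (IZR k * y)) by ring.
    rewrite Rmult_0_l, Rplus_0_r, cos_0, cos_2a_sin. simpl; field.
Qed.

Lemma is_lim_const_eq (c l : R) : is_lim (fun _ => c) p_infty l -> c = l.
Proof.
  intros Hlim. apply is_lim_unique in Hlim.
  rewrite Lim_const in Hlim. now injection Hlim.
Qed.

Theorem theorem4p4 : ~ (exists M : nat, (0 < M)%nat /\ determining_modes M).
Proof.
  intros [M [_ Hdet]].
  set (k := Z.of_nat (S M)).
  set (w := fsub (shear k) zero_field).
  assert (Hw1 : forall x y, comp1 w x y = sin (IZR k * y))
    by (intros; unfold comp1, w, fsub, shear, zero_field; simpl; ring).
  assert (Hw2 : forall x y, comp2 w x y = 0)
    by (intros; unfold comp2, w, fsub, shear, zero_field; simpl; ring).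
  assert (Hlow : Hnorm (PM M w) = 0).
  { apply Hnorm_eq0; intros x y; unfold comp1, comp2, PM; cbn [fst snd].
    - apply (PM_scalar_sin_y_eq0 _ k); [unfold k; lia | exact Hw1].
    - now apply PM_scalar_eq0. }
  assert (Hlim : is_lim (fun _ => sqrt (2 * PI ^ 2)) p_infty 0).
  { apply (is_lim_ext (fun _ => Hnorm w)).
    - intros _; apply (Hnorm_sin_y _ k); [unfold k; lia | exact Hw1 | exact Hw2].
    - apply (Hdet _ _ (euler_solution_shear k) euler_solution_zero).
      apply (is_lim_ext (fun _ => 0)); [intros _; exact (eq_sym Hlow) | apply is_lim_const]. }
  apply is_lim_const_eq, sqrt_eq_0 in Hlim; [| pose proof PI_RGT_0; nra].
  pose proof PI_RGT_0; nra.
Qed.
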